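(* Let $X\in\mathbb{R}^n$ be a sub-Gaussian random vector with variance proxy $\sigma^2>0$. Then for any $\delta\in(0,1)$ and any $\varepsilon\in(0,1)$, $$\mathbb{P}\left(\|X\|\le \sigma\sqrt{\frac{\log\frac{1}{1-\varepsilon^2}}{\varepsilon^2}\,n+\frac{2}{\varepsilon^2}\log\frac{1}{\delta}}\right)\ge 1-\delta.$$
   Context: A random vector $X\in\mathbb{R}^n$ is sub-Gaussian with variance proxy $\sigma^2>0$ if $\mathbb{E}\left[e^{\lambda\langle \ell, X\rangle}\right]\le e^{\lambda^2\sigma^2/2}$ for all $\lambda\in\mathbb{R}$ and all $\ell\in\mathcal{S}^{n-1}=\{x\in\mathbb{R}^n:\|x\|=1\}$. $\|\cdot\|$ denotes the Euclidean norm. *)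

From mathcomp Require Import all_boot all_order all_algebra.
From mathcomp Require Import all_classical all_reals all_analysis.
Set Implicit Arguments. Unset Strict Implicit. Unset Printing Implicit Defensive.
Import Order.TTheory GRing.Theory Num.Theory.
Local Open Scope ring_scope.
Local Open Scope classical_set_scope.

Definition vnorm (R : realType) (n : nat) (x : 'I_n -> R) : R :=
  Num.sqrt (\sum_(i < n) x i ^+ 2).

Definition vdot (R : realType) (n : nat) (l x : 'I_n -> R) : R :=
  \sum_(i < n) l i * x i.

Definition subgaussian_vec (R : realType) (d : measure_display)
  (T : measurableType d) (P : probability T R) (n : nat)
  (X : 'I_n -> {RV P >-> R}) (sigma2 : R) : Prop :=
  forall (lam : R) (l : 'I_n -> R), vnorm l = 1 ->
    ('E_P[fun w => expR (lam * vdot l (fun i => X i w))]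
       <= (expR (lam ^+ 2 * sigma2 / 2))%:E)%E.

From mathcomp Require Import all_boot all_order all_algebra.
From mathcomp Require Import all_classical all_reals all_analysis.
From mathcomp Require Import measurable_realfun ring.
Import Order.TTheory GRing.Theory Num.Theory.
Local Open Scope ring_scope.
Local Open Scope classical_set_scope.

(* For a standard Gaussian g, exp(z^2/2) = E[exp(g z)] (Hubbard-Stratonovich).
   Applied to z = c X_i and combined with Tonelli, this trades the square of one
   coordinate of X for a linear term g c X_i, which the sub-Gaussian hypothesis
   bounds at the cost of a factor exp(c^2 sigma^2 g^2 / 2), whose Gaussian mean
   is (1 - c^2 sigma^2)^(-1/2).  Iterating over the coordinates,
   E[exp(c^2 |X|^2 / 2)] <= (1 - c^2 sigma^2)^(-n/2), and Chernoff's bound with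
   c = eps / sigma gives the tail estimate. *)

Section normal_integrals.
Variable R : realType.
Local Notation mu := (@lebesgue_measure R).

Lemma normal_mgf (a : R) :
  (\int[mu]_g (expR (a * g) * normal_pdf 0 1 g)%:E = (expR (a ^+ 2 / 2))%:E)%E.
Proof.
transitivity (\int[mu]_g ((expR (a ^+ 2 / 2))%:E * (normal_pdf a 1 g)%:E))%E.
  apply: eq_integral => g _; rewrite -EFinM; congr EFin.
  rewrite /normal_pdf oner_eq0 /= /normal_fun.
  by rewrite mulrCA [RHS]mulrCA -!expRD expr1n; congr (_ * expR _); field.
rewrite integralZl //=; last exact: integrable_normal_pdf.
by rewrite integral_normal_pdf mule1.
Qed.

Lemma normal_mgf_sqr (t : R) : t < 1 ->
  (\int[mu]_g (expR (t * g ^+ 2 / 2) * normal_pdf 0 1 g)%:E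
   = ((Num.sqrt (1 - t))^-1)%:E)%E.
Proof.
rewrite -subr_gt0 => q_gt0; set q := 1 - t in q_gt0 *.
have sq_gt0 : 0 < Num.sqrt q by rewrite sqrtr_gt0.
set s := (Num.sqrt q)^-1.
have s_neq0 : s != 0 by rewrite invr_eq0 gt_eqF.
have s2 : s ^+ 2 = q^-1 by rewrite exprVn sqr_sqrtr // ltW.
transitivity (\int[mu]_g (s%:E * (normal_pdf 0 s g)%:E))%E.
  apply: eq_integral => g _; rewrite -EFinM; congr EFin.
  rewrite /normal_pdf oner_eq0 (negbTE s_neq0) /= /normal_fun /normal_peak.
  rewrite s2 expr1n mul1r -!mulrnAr.
  rewrite sqrtrM ?invr_ge0 ?ltW // sqrtrV ?ltW // invfM invrK [RHS]mulrA (mulrA s).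
  rewrite mulVf ?gt_eqF // mul1r mulrCA -expRD; congr (_ * expR _).
  by rewrite /q; field; rewrite -/q gt_eqF.
rewrite integralZl //=; last exact: integrable_normal_pdf.
by rewrite integral_normal_pdf mule1.
Qed.

End normal_integrals.

Section gaussian_linearization.
Context {d} {T : measurableType d} {R : realType}.
Variable mu : {sigma_finite_measure set T -> \bar R}.
Local Notation leb := (@lebesgue_measure R).

Lemma gaussian_linearization_le (Y Z : T -> R) (K t : R) :
  measurable_fun setT Y -> measurable_fun setT Z -> t < 1 -> 0 <= K ->
  (forall g, \int[mu]_w (expR (Y w + g * Z w))%:E <= (K * expR (t * g ^+ 2 / 2))%:E)%E ->
  (\int[mu]_w (expR (Y w + Z w ^+ 2 / 2))%:E <= (K / Num.sqrt (1 - t))%:E)%E.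
Proof.
move=> mY mZ t_lt1 K_ge0 bound.
pose F (z : T * R) := (expR (Y z.1 + z.2 * Z z.1) * normal_pdf 0 1 z.2)%:E.
have F_ge0 z : (0 <= F z)%E by rewrite lee_fin mulr_ge0 ?expR_ge0 ?normal_pdf_ge0.
have mF : measurable_fun setT F.
  apply/measurable_EFinP; apply: measurable_funM.
    apply: measurableT_comp => //; apply: measurable_funD.
      exact: measurableT_comp mY measurable_fst.
    apply: measurable_funM; first exact: measurable_snd.
    exact: measurableT_comp mZ measurable_fst.
  exact: measurableT_comp (measurable_normal_pdf 0 1) measurable_snd.
have mG : measurable_fun setT (fun g : R => expR (t * g ^+ 2 / 2) * normal_pdf 0 1 g).
  apply: measurable_funM; last exact: measurable_normal_pdf.
  apply: measurableT_comp => //; apply: measurable_funM => //.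
  by apply: measurable_funM => //; exact: exprn_measurable.
have linearize w : (expR (Y w + Z w ^+ 2 / 2))%:E = (\int[leb]_g F (w, g))%E.
  rewrite expRD EFinM -normal_mgf -ge0_integralZl_EFin ?expR_ge0 //.
  - by apply: eq_integral => g _; rewrite /F -EFinM mulrA -expRD (mulrC (Z w)).
  - by move=> g _; rewrite lee_fin mulr_ge0 ?expR_ge0 ?normal_pdf_ge0.
  - apply/measurable_EFinP; apply: measurable_funM; last exact: measurable_normal_pdf.
    by apply: measurableT_comp => //; apply: measurable_funM.
under eq_integral do rewrite linearize.
rewrite (@fubini_tonelli _ _ _ _ _ mu leb F mF F_ge0) /=.
apply: (@le_trans _ _
  (\int[leb]_g (K%:E * (expR (t * g ^+ 2 / 2) * normal_pdf 0 1 g)%:E))%E).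
  apply: ge0_le_integral => //.
  - by move=> g _; apply: integral_ge0 => w _; exact: F_ge0.
  - exact: measurable_fun_fubini_tonelli_G F mF F_ge0.
  - by apply/measurable_EFinP; apply: measurable_funM.
  move=> g _; rewrite /F.
  under eq_integral do rewrite /= EFinM muleC.
  rewrite ge0_integralZl_EFin ?normal_pdf_ge0 //; last first.
    apply/measurable_EFinP; apply: measurableT_comp => //.
    by apply: measurable_funD => //; apply: measurable_funM.
  rewrite -EFinM (mulrA K) (mulrC (K * _)) EFinM.
  by apply: lee_wpmul2l; [rewrite lee_fin normal_pdf_ge0 | exact: bound].
rewrite ge0_integralZl_EFin //.
- by rewrite normal_mgf_sqr // -EFinM.
- by move=> g _; rewrite lee_fin mulr_ge0 ?expR_ge0 ?normal_pdf_ge0.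
- exact/measurable_EFinP.
Qed.

End gaussian_linearization.

Section vectors.
Variables (R : realType) (n : nat).
Implicit Types (v x : 'I_n -> R).

Lemma vdot_update v x i0 a : v i0 = 0 ->
  vdot [eta v with i0 |-> a] x = vdot v x + a * x i0.
Proof.
move=> v_i0; rewrite /vdot (bigD1 i0) //= [in RHS](bigD1 i0) //= eqxx v_i0.
rewrite mul0r add0r addrC; congr (_ + _).
by apply: eq_bigr => i /negbTE ->.
Qed.

Lemma sumsq_update v i0 a : v i0 = 0 ->
  \sum_i [eta v with i0 |-> a] i ^+ 2 = \sum_i v i ^+ 2 + a ^+ 2.
Proof.
move=> v_i0; rewrite (bigD1 i0) //= [in RHS](bigD1 i0) //= eqxx v_i0 expr0n add0r.
rewrite addrC; congr (_ + _).
by apply: eq_bigr => i /negbTE ->.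
Qed.

Lemma vnorm_le x r : 0 <= r -> (vnorm x <= r) = (\sum_i x i ^+ 2 <= r ^+ 2).
Proof. by move=> r_ge0; rewrite -[RHS]ler_sqrt ?sqr_ge0 // sqrtr_sqr ger0_norm. Qed.

End vectors.

Section subgaussian_vec.
Context {R : realType} {d : measure_display} {T : measurableType d}.
Context {P : probability T R} {n : nat} {X : 'I_n -> {RV P >-> R}} {sigma2 : R}.
Hypothesis subgX : subgaussian_vec X sigma2.

Lemma measurable_vdot (v : 'I_n -> R) :
  measurable_fun setT (fun w => vdot v (fun i => X i w)).
Proof. by apply: measurable_sum => i; apply: measurable_funM. Qed.

Lemma measurable_sumsq (p : pred 'I_n) :
  measurable_fun setT (fun w => \sum_(i | p i) X i w ^+ 2).
Proof.
under eq_fun do rewrite big_mkcond.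
by apply: measurable_sum => i; case: (p i) => //; apply: measurable_funX.
Qed.

Lemma subgaussian_vec_mgf (v : 'I_n -> R) :
  (\int[P]_w (expR (vdot v (fun i => X i w)))%:E
    <= (expR (sigma2 * (\sum_i v i ^+ 2) / 2))%:E)%E.
Proof.
set N2 := \sum_i v i ^+ 2.
have N2_ge0 : 0 <= N2 by apply: sumr_ge0 => i _; exact: sqr_ge0.
have [N2_eq0|N2_neq0] := eqVneq N2 0.
  have v0 i : v i = 0.
    apply/eqP; rewrite -sqrf_eq0; apply/eqP.
    exact: psumr_eq0P (fun i _ => sqr_ge0 (v i)) N2_eq0 i isT.
  rewrite N2_eq0 mulr0 mul0r expR0.
  have vdot0 x : vdot v x = 0 by rewrite /vdot big1 // => i _; rewrite v0 mul0r.
  under eq_integral do rewrite vdot0 expR0.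
  by rewrite integral_cst //= probability_setT mul1e.
set r := Num.sqrt N2.
have r_gt0 : 0 < r by rewrite sqrtr_gt0 lt_neqAle eq_sym N2_neq0.
have unit_v : vnorm (fun i => v i / r) = 1.
  rewrite /vnorm; under eq_bigr do rewrite expr_div_n.
  by rewrite -mulr_suml -/N2 /r sqr_sqrtr // divff // sqrtr1.
have vdot_unit w :
    vdot v (fun i => X i w) = r * vdot (fun i => v i / r) (fun i => X i w).
  rewrite /vdot mulr_sumr; apply: eq_bigr => i _.
  by rewrite mulrA mulrCA mulfV ?gt_eqF // mulr1.
under eq_integral do rewrite vdot_unit.
by have := subgX r _ unit_v; rewrite unlock /r sqr_sqrtr // (mulrC N2).
Qed.

Lemma subgaussian_vec_partial_sqnorm_mgf (c : R) : c ^+ 2 * sigma2 < 1 ->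
  forall (S : {set 'I_n}) (v : 'I_n -> R), {in S, forall i, v i = 0} ->
  (\int[P]_w (expR (c ^+ 2 / 2 * \sum_(i in S) X i w ^+ 2 + vdot v (fun i => X i w)))%:E
   <= ((Num.sqrt (1 - c ^+ 2 * sigma2))^-1 ^+ #|S|
       * expR (sigma2 * (\sum_i v i ^+ 2) / 2))%:E)%E.
Proof.
move=> c_lt S; have [k cardS] : exists k, #|S| = k by exists #|S|.
elim: k S cardS => [|k IH] S cardS v v_S; rewrite cardS.
  move/cards0_eq: cardS => ->.
  under eq_integral do rewrite big_set0 mulr0 add0r.
  by rewrite expr0 mul1r subgaussian_vec_mgf.
have [i0 i0S] : exists i0, i0 \in S by apply/card_gt0P; rewrite cardS.
have cardSi0 : #|S :\ i0| = k by move: cardS; rewrite (cardsD1 i0) i0S => -[].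
set K := (Num.sqrt (1 - c ^+ 2 * sigma2))^-1 ^+ k * expR (sigma2 * (\sum_i v i ^+ 2) / 2).
pose Y w := c ^+ 2 / 2 * \sum_(i in S :\ i0) X i w ^+ 2 + vdot v (fun i => X i w).
have split_i0 w : c ^+ 2 / 2 * \sum_(i in S) X i w ^+ 2 + vdot v (fun i => X i w)
    = Y w + (c * X i0 w) ^+ 2 / 2.
  by rewrite (big_setD1 i0) //= /Y; ring.
under eq_integral do rewrite split_i0.
rewrite exprSr mulrAC.
apply: (gaussian_linearization_le P Y (fun w => c * X i0 w) K) => //.
- by apply: measurable_funD; [apply: measurable_funM => //; exact: measurable_sumsq
                             | exact: measurable_vdot].
- exact: measurable_funM.
- by rewrite /K mulr_ge0 ?expR_ge0 // exprn_ge0 // invr_ge0 sqrtr_ge0.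
move=> g; pose v' := [eta v with i0 |-> g * c].
have v_i0 : v i0 = 0 by exact: v_S.
have v'_S : {in S :\ i0, forall i, v' i = 0}.
  by move=> i; rewrite !inE /v' /= => /andP[/negbTE -> /v_S].
have := IH _ cardSi0 _ v'_S; rewrite sumsq_update //.
congr (_ <= EFin _)%E.
  apply: eq_integral => w _; rewrite vdot_update // /Y; congr (EFin (expR _)); ring.
by rewrite cardSi0 /K -[RHS]mulrA -expRD; congr (_ * expR _); ring.
Qed.

Lemma subgaussian_vec_sqnorm_mgf (c : R) : c ^+ 2 * sigma2 < 1 ->
  (\int[P]_w (expR (c ^+ 2 / 2 * \sum_i X i w ^+ 2))%:E
   <= ((Num.sqrt (1 - c ^+ 2 * sigma2))^-1 ^+ n)%:E)%E.
Proof.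
move=> c_lt.
have := subgaussian_vec_partial_sqnorm_mgf _ c_lt [set: 'I_n] (fun=> 0).
have vdot0 x : vdot (fun=> 0) x = 0 by rewrite /vdot big1 // => i _; rewrite mul0r.
rewrite cardsT card_ord big1 ?expr0n // mulr0 mul0r expR0 mulr1.
under eq_integral do rewrite vdot0 addr0.
under eq_integral do under eq_bigl do rewrite inE.
by apply.
Qed.

Lemma subgaussian_vec_sqnorm_tail (c r : R) : c != 0 -> c ^+ 2 * sigma2 < 1 ->
  (P [set w | (r <= \sum_i X i w ^+ 2)%R]
   <= ((Num.sqrt (1 - c ^+ 2 * sigma2))^-1 ^+ n * expR (- (c ^+ 2 / 2 * r)))%:E)%E.
Proof.
move=> c_neq0 c_lt.
pose Y : {RV P >-> R} := \sum_i (X i : {mfun T >-> R}) ^+ 2.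
have YE w : Y w = \sum_i X i w ^+ 2.
  by rewrite /Y mfun_sum; apply: eq_bigr => i _; rewrite mfunX.
have c2_gt0 : 0 < c ^+ 2 / 2 by rewrite divr_gt0 // exprn_even_gt0.
have -> : [set w | (r <= \sum_i X i w ^+ 2)%R] = [set w | (r <= Y w)%R].
  by apply/seteqP; split => w /=; rewrite YE.
apply: (le_trans (chernoff Y r c2_gt0)); rewrite [leRHS]EFinM.
apply: lee_wpmul2r; first by rewrite lee_fin expR_ge0.
rewrite /mmt_gen_fun unlock.
under eq_integral => w _ do rewrite /comp /GRing.mulr_fun YE mulrC.
exact: subgaussian_vec_sqnorm_mgf c c_lt.
Qed.

Lemma subgaussian_vec_norm_concentration (c rho : R) :
  c != 0 -> c ^+ 2 * sigma2 < 1 -> 0 <= rho ->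
  ((1 - (Num.sqrt (1 - c ^+ 2 * sigma2))^-1 ^+ n * expR (- (c ^+ 2 / 2 * rho ^+ 2)))%:E
   <= P [set w | (vnorm (fun i => X i w) <= rho)%R])%E.
Proof.
move=> c_neq0 c_lt rho_ge0.
pose A := [set w | (\sum_i X i w ^+ 2 <= rho ^+ 2)%R].
pose B := [set w | (rho ^+ 2 <= \sum_i X i w ^+ 2)%R].
have mA : measurable A.
  by rewrite -[A]setTI; apply: measurable_fun_le => //; exact: measurable_sumsq.
have mB : measurable B.
  by rewrite -[B]setTI; apply: measurable_fun_le => //; exact: measurable_sumsq.
rewrite (_ : [set w | _] = A); last first.
  by apply/seteqP; split => w /=; rewrite vnorm_le.
apply: (@le_trans _ _ (P (~` B))).
  by rewrite probability_setC // EFinB leeB ?subgaussian_vec_sqnorm_tail.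
apply: le_measure; rewrite ?inE.
- exact: measurableC.
- exact: mA.
- by move=> w /= /negP; rewrite -ltNge => /ltW.
Qed.

End subgaussian_vec.

Lemma invr_sqrtr_expR (R : realType) (q : R) : 0 < q ->
  (Num.sqrt q)^-1 = expR (ln (1 / q) / 2).
Proof.
move=> q_gt0; rewrite -[LHS]lnK ?posrE ?invr_gt0 ?sqrtr_gt0 //; congr expR.
rewrite -powR12_sqrt ?ltW // lnV ?posrE ?powR_gt0 // ln_powR div1r lnV ?posrE //.
by rewrite mulNr mulrC.
Qed.

Theorem theorem2 (R : realType) (d : measure_display) (T : measurableType d)
  (P : probability T R) (n : nat) (X : 'I_n -> {RV P >-> R}) (sigma : R) :
  0 < sigma -> subgaussian_vec X (sigma ^+ 2) ->
  forall delta eps : R, 0 < delta < 1 -> 0 < eps < 1 ->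
  ((1 - delta)%:E <=
    P [set w | (vnorm (fun i => X i w) <=
       sigma * Num.sqrt (ln (1 / (1 - eps ^+ 2)) / eps ^+ 2 * n%:R
                         + 2 / eps ^+ 2 * ln (1 / delta)))%R])%E.
Proof.
move=> sigma_gt0 subgX delta eps /andP[delta_gt0 delta_lt1] /andP[eps_gt0 eps_lt1].
set q := 1 - eps ^+ 2.
have q_gt0 : 0 < q by rewrite subr_gt0 expr_lt1 // ltW.
set Q := ln (1 / q) / eps ^+ 2 * n%:R + _.
have Q_ge0 : 0 <= Q.
  have ln_q : 0 <= ln (1 / q) by rewrite ln_ge0 // div1r invf_ge1 // gerBl sqr_ge0.
  have ln_delta : 0 <= ln (1 / delta) by rewrite ln_ge0 // div1r invf_ge1 // ltW.
  by apply: addr_ge0; apply: mulr_ge0; rewrite ?divr_ge0 ?sqr_ge0.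
have c_eps : (eps / sigma) ^+ 2 * sigma ^+ 2 = eps ^+ 2 by field; rewrite gt_eqF.
have c_neq0 : eps / sigma != 0 by rewrite mulf_neq0 ?invr_eq0 ?gt_eqF.
have c_lt : (eps / sigma) ^+ 2 * sigma ^+ 2 < 1 by rewrite c_eps expr_lt1 // ltW.
have rho_ge0 : 0 <= sigma * Num.sqrt Q by rewrite mulr_ge0 ?sqrtr_ge0 // ltW.
have := subgaussian_vec_norm_concentration subgX _ _ c_neq0 c_lt rho_ge0.
rewrite c_eps -/q invr_sqrtr_expR // -expRM_natl -expRD (_ : expR _ = delta) //.
rewrite -[RHS]lnK ?posrE //; congr expR.
rewrite [(sigma * _) ^+ 2]exprMn sqr_sqrtr // /Q !div1r (lnV delta_gt0).
by field; rewrite !gt_eqF.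
Qed.
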